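(* Let $(V_n)_{n\in\mathbb{N}}$ be a quasi non-conforming approximation of $V$ in $X$. Then: (i) if $v_n\in V_{m_n}$ with $m_n\to\infty$ and $v_n\rightharpoonup v$ weakly in $X$, then $v\in V$. (ii) If $v_n\in V_{m_n}$ with $m_n\to\infty$, $\sup_n\|v_n\|_X<\infty$, and $v\in V$, then $v_n\rightharpoonup v$ weakly in $X$ if and only if $P_Hjv_n\rightharpoonup jv$ weakly in $H$. (iii) For every $h\in H$ there are $v_n\in V_{m_n}$ with $m_n\to\infty$ such that $jv_n\to h$ in $Y$.
   Context: An evolution triple $(V,H,j)$: $V$ reflexive Banach, $H$ Hilbert, $j:V\to H$ linear injective bounded with dense range. Let $(V,H,j)$, $(X,Y,j)$ be evolution triples with $V\subseteq X$, $\|\cdot\|_V=\|\cdot\|_X$ on $V$, $H\subseteq Y$, $(\cdot,\cdot)_H=(\cdot,\cdot)_Y$ on $H$, the embedding $X\to Y$ restricting to that of $V\to H$; $P_H:Y\to H$ is the orthogonal projection. $I=(0,T)$, $T<\infty$, $1<p<\infty$. A sequence of closed subspaces $(V_n)$ of $X$ is a quasi non-conforming approximation of $V$ in $X$ if (QNC.1) there is a dense $D\subseteq V$ such that each $v\in D$ is the $X$-limit of some $v_n\in V_n$, and (QNC.2) whenever $\boldsymbol{x}_n\in L^p(I,V_{m_n})$ with $m_n\to\infty$ and $\boldsymbol{x}_n\rightharpoonup\boldsymbol{x}$ in $L^p(I,X)$, then $\boldsymbol{x}\in L^p(I,V)$. *)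

From HB Require Import structures.
From mathcomp Require Import all_boot all_order all_algebra.
From mathcomp Require Import all_classical all_reals all_analysis.
Set Implicit Arguments. Unset Strict Implicit. Unset Printing Implicit Defensive.
Import Order.TTheory GRing.Theory Num.Theory.
Import numFieldNormedType.Exports.
Local Open Scope classical_set_scope.
Local Open Scope ring_scope.

Section Defs.
Variable R : realType.

Definition lin_subspace (E : normedModType R) (S : set E) : Prop :=
  S 0 /\ forall (a : R) (x y : E), S x -> S y -> S (a *: x + y).

Definition closed_subspace (E : normedModType R) (S : set E) : Prop :=
  lin_subspace S /\ closed S.

(* f : E -> R restricted to S is an element of the dual S^* of the normed
   space (S, ||.||_E): linear on S and bounded on S. *)
Definition dual_elt_on (E : normedModType R) (S : set E) (f : E -> R) : Prop :=
  (forall (a : R) (x y : E), S x -> S y -> f (a *: x + y) = a * f x + f y) /\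
  exists C : R, forall x, S x -> `|f x| <= C * `|x|.

Definition weak_cvg_in (E : normedModType R) (S : set E) (u : nat -> E) (x : E)
  : Prop :=
  S x /\ forall f : E -> R, dual_elt_on S f -> (fun n => f (u n)) @ \oo --> f x.

Definition weak_cvg (E : normedModType R) (u : nat -> E) (x : E) : Prop :=
  weak_cvg_in setT u x.

Definition dual_set (E : normedModType R) : set (E -> R) := dual_elt_on setT.

(* Reflexivity: every bounded linear functional Phi on E^* (bounded w.r.t.
   the operator norm ||f|| = inf{M >= 0 | forall x, |f x| <= M ||x||})
   is evaluation at some x in E. *)
Definition reflexive_space (E : normedModType R) : Prop :=
  forall Phi : (E -> R) -> R,
    (forall (a : R) f g, dual_set f -> dual_set g ->
        Phi (fun x => a * f x + g x) = a * Phi f + Phi g) ->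
    (exists C : R, forall f M, dual_set f -> 0 <= M ->
        (forall x, `|f x| <= M * `|x|) -> `|Phi f| <= C * M) ->
    exists x : E, forall f, dual_set f -> Phi f = f x.

Definition inner_product (Y : normedModType R) (ip : Y -> Y -> R) : Prop :=
  (forall x y, ip x y = ip y x) /\
  (forall (a : R) x y z, ip (a *: x + y) z = a * ip x z + ip y z) /\
  (forall x, ip x x = `|x| ^+ 2).

Definition orth_proj (Y : normedModType R) (ip : Y -> Y -> R) (H : set Y)
  (P : Y -> Y) : Prop :=
  (forall y, H (P y)) /\ (forall y h, H h -> ip (y - P y) h = 0).

Definition bounded_linear_inj (X Y : normedModType R) (j : X -> Y) : Prop :=
  (forall (a : R) x y, j (a *: x + y) = a *: j x + j y) /\
  injective j /\ exists C : R, forall x, `|j x| <= C * `|x|.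

Definition tends_to_infty (m : nat -> nat) : Prop :=
  forall N : nat, exists n0 : nat, forall n, (n0 <= n)%N -> (N <= m n)%N.

Definition Iset (T : R) : set R := `]0, T[.

Definition simple_fun (X : normedModType R) (s : R -> X) : Prop :=
  exists (k : nat) (A : 'I_k -> set R) (c : 'I_k -> X),
    (forall i, measurable (A i)) /\
    forall t, s t = \sum_(i < k) (\1_(A i) t : R) *: c i.

Definition strongly_measurable (X : normedModType R) (T : R) (f : R -> X)
  : Prop :=
  exists s : nat -> R -> X, (forall k, simple_fun (s k)) /\
    {ae (@lebesgue_measure R), forall t, Iset T t ->
        (fun k => s k t) @ \oo --> f t}.

Definition Lp_fun (X : normedModType R) (p T : R) (f : R -> X) : Prop :=
  strongly_measurable T f /\
  (\int[(@lebesgue_measure R)]_(t in Iset T) ((`|f t| `^ p)%:E) < +oo)%E.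

Definition Lp_norm (X : normedModType R) (p T : R) (f : R -> X) : R :=
  (fine (\int[(@lebesgue_measure R)]_(t in Iset T) ((`|f t| `^ p)%:E)))
    `^ (p^-1).

Definition Lp_fun_in (X : normedModType R) (p T : R) (W : set X) (f : R -> X)
  : Prop :=
  Lp_fun p T f /\ {ae (@lebesgue_measure R), forall t, Iset T t -> W (f t)}.

Definition Lp_dual_elt (X : normedModType R) (p T : R) (phi : (R -> X) -> R)
  : Prop :=
  (forall (a : R) f g, Lp_fun p T f -> Lp_fun p T g ->
      phi (fun t => a *: f t + g t) = a * phi f + phi g) /\
  exists C : R, forall f, Lp_fun p T f -> `|phi f| <= C * Lp_norm p T f.

Definition Lp_weak_cvg (X : normedModType R) (p T : R) (u : nat -> R -> X)
  (x : R -> X) : Prop :=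
  Lp_fun p T x /\ (forall n, Lp_fun p T (u n)) /\
  forall phi, Lp_dual_elt p T phi -> (fun n => phi (u n)) @ \oo --> phi x.

Definition quasi_nonconforming (X : normedModType R) (p T : R)
  (V : set X) (Vn : nat -> set X) : Prop :=
  (forall n, closed_subspace (Vn n)) /\
  (exists D : set X, D `<=` V /\ V `<=` closure D /\
     forall v, D v -> exists vn : nat -> X,
        (forall n, Vn n (vn n)) /\ vn @ \oo --> v) /\
  (forall (m : nat -> nat) (x : nat -> R -> X) (x0 : R -> X),
      tends_to_infty m ->
      (forall n, Lp_fun_in p T (Vn (m n)) (x n)) ->
      Lp_weak_cvg p T x x0 ->
      Lp_fun_in p T V x0).

End Defs.

From HB Require Import structures.
From mathcomp Require Import all_boot all_order all_algebra.
From mathcomp Require Import all_classical all_reals all_analysis.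
From mathcomp Require Import ring lra.
Import Order.TTheory GRing.Theory Num.Theory.
Import numFieldNormedType.Exports.
Local Open Scope classical_set_scope.
Local Open Scope ring_scope.
Set Implicit Arguments. Unset Strict Implicit. Unset Printing Implicit Defensive.

(* Part (i): a weakly convergent sequence x_n in X gives a weakly convergent
   sequence of time-constant functions in L^p(I, X), so (QNC.2) puts the limit
   in V for a.e. t in I, hence in V since |I| > 0.
   Part (ii): "=>" holds because P_H j is bounded and linear.  For "<=" we
   argue by contradiction along a subsequence.  The needed weak sequential
   compactness is proved from scratch: a diagonal argument plus the
   projection theorem give a subsequence along which every inner product
   (j x_n, y) converges, and reflexivity of X (applied to ultrafilter limits,
   used as Banach limits) turns this into weak convergence in X.  The weak
   limit lies in V by (i) and is identified with v through P_H, j and the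
   inner product.
   Part (iii): density of j V in H combined with (QNC.1). *)

Section InnerProduct.
Variables (R : realType) (Y : normedModType R) (ip : Y -> Y -> R).
Hypothesis hip : inner_product ip.

Lemma ip_sym x y : ip x y = ip y x.
Proof. by case: hip. Qed.

Lemma ip_lin a x y z : ip (a *: x + y) z = a * ip x z + ip y z.
Proof. by case: hip => _ []. Qed.

Lemma ip_self x : ip x x = `|x| ^+ 2.
Proof. by case: hip => _ []. Qed.

Lemma ip0l z : ip 0 z = 0.
Proof. by have := ip_lin 1 0 0 z; rewrite scaler0 addr0 mul1r; lra. Qed.

Lemma ipDl x y z : ip (x + y) z = ip x z + ip y z.
Proof. by rewrite -[x in LHS]scale1r ip_lin mul1r. Qed.

Lemma ipZl a x z : ip (a *: x) z = a * ip x z.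
Proof. by rewrite -[a *: x]addr0 ip_lin ip0l addr0. Qed.

Lemma ipBl x y z : ip (x - y) z = ip x z - ip y z.
Proof. by rewrite ipDl -scaleN1r ipZl mulN1r. Qed.

Lemma ip0r z : ip z 0 = 0.
Proof. by rewrite ip_sym ip0l. Qed.

Lemma ipZr a x z : ip z (a *: x) = a * ip z x.
Proof. by rewrite !(ip_sym z) ipZl. Qed.

Lemma ipBr x y z : ip z (x - y) = ip z x - ip z y.
Proof. by rewrite !(ip_sym z) ipBl. Qed.

Lemma ip_eq0 x : ip x x = 0 -> x = 0.
Proof. by rewrite ip_self => /eqP; rewrite sqrf_eq0 normr_eq0 => /eqP. Qed.

Lemma normD2 x y : `|x + y| ^+ 2 = `|x| ^+ 2 + 2 * ip x y + `|y| ^+ 2.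
Proof.
by rewrite -!ip_self ipDl !(ip_sym _ (x + y)) !ipDl (ip_sym y x); lra.
Qed.

Lemma normB2 x y : `|x - y| ^+ 2 = `|x| ^+ 2 - 2 * ip x y + `|y| ^+ 2.
Proof. by rewrite normD2 -scaleN1r ipZr normrZ normrN normr1 mul1r; lra. Qed.

(* Parallelogram law; it makes minimising sequences Cauchy. *)
Lemma parallelogram (x y : Y) :
  `|x - y| ^+ 2 + `|x + y| ^+ 2 = 2 * `|x| ^+ 2 + 2 * `|y| ^+ 2.
Proof. by rewrite normB2 normD2; lra. Qed.

Lemma cauchy_schwarz x y : `|ip x y| <= `|x| * `|y|.
Proof.
have [->|y0] := eqVneq y 0; first by rewrite ip0r !normr0 mulr0.
have Y2 : 0 < `|y| ^+ 2 by rewrite exprn_gt0 // normr_gt0.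
set c := ip x y.
have := sqr_ge0 `|x - (c / `|y| ^+ 2) *: y|.
rewrite normB2 ipZr normrZ exprMn real_normK ?num_real // -/c.
have -> : `|x| ^+ 2 - 2 * (c / `|y| ^+ 2 * c) + (c / `|y| ^+ 2) ^+ 2 * `|y| ^+ 2
        = `|x| ^+ 2 - c ^+ 2 / `|y| ^+ 2.
  by field; rewrite normr_eq0.
move=> hc; have : c ^+ 2 / `|y| ^+ 2 <= `|x| ^+ 2 by lra.
rewrite ler_pdivrMr // => {}hc.
by rewrite -ler_sqr ?nnegrE ?mulr_ge0 // exprMn real_normK ?num_real.
Qed.

End InnerProduct.

Section Subspace.
Variables (R : realType) (E : normedModType R) (S : set E).
Hypothesis hS : lin_subspace S.

Lemma subspace0 : S 0.
Proof. by case: hS. Qed.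

Lemma subspaceZD a x y : S x -> S y -> S (a *: x + y).
Proof. by case: hS => _; apply. Qed.

Lemma subspaceD x y : S x -> S y -> S (x + y).
Proof. by move=> Sx Sy; have := subspaceZD 1 Sx Sy; rewrite scale1r. Qed.

Lemma subspaceZ a x : S x -> S (a *: x).
Proof. by move=> Sx; rewrite -[_ *: _]addr0; apply: subspaceZD => //; exact: subspace0. Qed.

Lemma subspaceB x y : S x -> S y -> S (x - y).
Proof. by move=> Sx Sy; rewrite addrC -scaleN1r; apply: subspaceZD. Qed.

End Subspace.

Lemma invS_lt_eventually (R : realType) (e : R) : 0 < e ->
  exists N : nat, forall n, (N <= n)%N -> n.+1%:R^-1 < e.
Proof.
move=> e0; have [N _ HN] := near_infty_natSinv_lt (PosNum e0).
by exists N => n hn; apply: HN.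
Qed.

Lemma cvg_invS_bound (R : realType) (V : normedModType R) (u : nat -> V) l k :
  (forall n, (k <= n)%N -> `|l - u n| < n.+1%:R^-1) -> u @ \oo --> l.
Proof.
move=> hu; apply/cvgrPdist_lt => e e0; have [N HN] := invS_lt_eventually e0.
exists (maxn N k) => // n /=; rewrite geq_max => /andP[Nn kn].
exact: lt_trans (hu n kn) (HN n Nn).
Qed.

Section Projection.
Variables (R : realType) (Y : completeNormedModType R) (ip : Y -> Y -> R).
Hypothesis hip : inner_product ip.
Variable G : set Y.
Hypothesis hG : closed_subspace G.

Lemma min_dist_orth y g : G g -> (forall s, G s -> `|y - g| <= `|y - s|) ->
  forall s, G s -> ip (y - g) s = 0.
Proof.
move=> Gg gmin s Gs; set c := ip (y - g) s; set S := `|s| ^+ 2.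
have S0 : 0 <= S by exact: sqr_ge0.
have var t : 0 <= t ^+ 2 * S - 2 * t * c.
  have := gmin _ (subspaceD hG.1 Gg (subspaceZ hG.1 t Gs)).
  rewrite -ler_sqr ?nnegrE // opprD addrA (normB2 hip (y - g)) (ipZr hip) normrZ.
  by rewrite exprMn real_normK ?num_real // -/c -/S; lra.
pose u := c / (S + 1).
have cu : c = u * (S + 1) by rewrite /u divfK // gt_eqF //; lra.
have := var u; rewrite cu => hu.
have u0 : u ^+ 2 <= 0 by nra.
have : u ^+ 2 == 0 by rewrite eq_le u0 sqr_ge0.
by rewrite sqrf_eq0 => /eqP ->; rewrite mul0r.
Qed.

(* Parallelogram estimate: if d is a lower bound for the squared distances
   from y to G, then two points of G that are nearly closest to y are close
   to each other (apply the parallelogram law to y - a, y - b and use that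
   their midpoint lies in G). *)
Lemma near_minimizers_close y d a b : G a -> G b ->
  (forall s, G s -> d <= `|y - s| ^+ 2) ->
  `|a - b| ^+ 2 <= 2 * `|y - a| ^+ 2 + 2 * `|y - b| ^+ 2 - 4 * d.
Proof.
move=> Ga Gb dle; have := dle _ (subspaceZ hG.1 2^-1 (subspaceD hG.1 Ga Gb)).
have sum : (y - a) + (y - b) = 2 *: (y - 2^-1 *: (a + b)).
  rewrite scalerBr scalerA divff ?pnatr_eq0 // scale1r scaler_nat mulr2n.
  by rewrite opprD !addrA; congr (_ - _); rewrite addrAC.
have dif : (y - a) - (y - b) = b - a by rewrite opprB addrC addrA subrK.
have := parallelogram hip (y - a) (y - b).
by rewrite sum dif normrZ exprMn distrC ger0_norm // => *; lra.
Qed.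

(* In the complete space Y, the distance from y to the closed subspace G is
   attained: a minimising sequence is Cauchy by the parallelogram estimate. *)
Lemma dist_minimizer y : exists2 g, G g & forall s, G s -> `|y - g| <= `|y - s|.
Proof.
set E := [set `|y - s| ^+ 2 | s in G].
have lbE : has_lbound E by exists 0 => _ [s _ <-]; exact: sqr_ge0.
have hE : has_inf E by split => //; exists (`|y - 0| ^+ 2), 0 => //; exact: subspace0 hG.1.
set d := inf E.
have dle s : G s -> d <= `|y - s| ^+ 2 by move=> Gs; apply: ge_inf => //; exists s.
have approx n : exists s, G s /\ `|y - s| ^+ 2 < d + n.+1%:R^-1.
  have n0 : 0 < n.+1%:R^-1 :> R by rewrite invr_gt0 ltr0n.
  by have [_ [s Gs <-] hs] := inf_adherent n0 hE; exists s.
have [sq hsq] := choice approx.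
have cauchy_sq n m : `|sq n - sq m| ^+ 2 < 2 * n.+1%:R^-1 + 2 * m.+1%:R^-1.
  have [[Gn hn] [Gm hm]] := (hsq n, hsq m).
  have := near_minimizers_close Gn Gm dle.
  by move: hn hm; move: (n.+1%:R^-1) (m.+1%:R^-1) => a b *; lra.
have sq_cvg : cvg (sq @ \oo).
  apply: cauchy_cvg; apply/cauchy_exP => e e0.
  have [N HN] := invS_lt_eventually (divr_gt0 (exprn_gt0 2 e0) (ltr0n R 4)).
  exists (sq N), N => // n /= Nn; rewrite -ball_normE /= -ltr_sqr ?nnegrE ?(ltW e0) //.
  have le_inv : n.+1%:R^-1 <= N.+1%:R^-1 :> R.
    by rewrite lef_pV2 ?posrE ?ltr0n // ler_nat ltnS.
  have := cauchy_sq N n; have := HN N (leqnn N); move: le_inv.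
  by move: (N.+1%:R^-1) (n.+1%:R^-1) => a b *; lra.
set g := lim (sq @ \oo).
have Gg : G g.
  apply: (@closed_cvg _ _ _ _ sq G _ _ _ sq_cvg); first by case: hG.
  by apply: nearW => n; case: (hsq n).
have gd : `|y - g| ^+ 2 <= d.
  apply/ler_addgt0Pr => e e0.
  have dist_cvg : (fun n => `|y - sq n| ^+ 2) @ \oo --> `|y - g| ^+ 2.
    have norm_cvg : (fun n => `|y - sq n|) @ \oo --> `|y - g|.
      by apply: cvg_norm; apply: cvgB => //; exact: cvg_cst.
    under eq_fun do rewrite expr2.
    by rewrite expr2; exact: cvgM.
  apply: (cvgr_to_le dist_cvg); have [N HN] := invS_lt_eventually e0.
  exists N => // n /= Nn; have := (hsq n).2; have := HN n Nn.
  by move: (n.+1%:R^-1) => a *; lra.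
exists g => // s Gs; rewrite -ler_sqr ?nnegrE //; exact: le_trans gd (dle s Gs).
Qed.

Lemma orth_decomposition y : exists2 g, G g & forall s, G s -> ip (y - g) s = 0.
Proof.
have [g Gg gmin] := dist_minimizer y.
by exists g => //; exact: min_dist_orth.
Qed.
End Projection.

Section OrthogonalProjection.
Variables (R : realType) (Y : normedModType R) (ip : Y -> Y -> R).
Hypothesis hip : inner_product ip.
Variables (H : set Y) (P : Y -> Y).
Hypothesis hH : lin_subspace H.
Hypothesis hP : orth_proj ip H P.

Lemma proj_in y : H (P y). Proof. by case: hP. Qed.

Lemma proj_orth y h : H h -> ip (y - P y) h = 0. Proof. by case: hP => _; apply. Qed.

Lemma ip_proj y h : H h -> ip (P y) h = ip y h.
Proof. by move=> Hh; have /eqP := proj_orth y Hh; rewrite (ipBl hip) subr_eq0 => /eqP. Qed.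

Lemma eq_in_subspace x y : H x -> H y -> (forall h, H h -> ip x h = ip y h) -> x = y.
Proof.
move=> Hx Hy xy; apply/eqP; rewrite -subr_eq0; apply/eqP; apply: (ip_eq0 hip).
by rewrite (ipBl hip) xy ?subrr //; exact: subspaceB.
Qed.

Lemma proj_id h : H h -> P h = h.
Proof. by move=> Hh; apply: eq_in_subspace => // [|k Hk]; [exact: proj_in | exact: ip_proj]. Qed.

Lemma proj_lin a x y : P (a *: x + y) = a *: P x + P y.
Proof.
apply: eq_in_subspace => [||h Hh]; first exact: proj_in.
  by apply: subspaceZD => //; exact: proj_in.
by rewrite ip_proj // !(ip_lin hip) !ip_proj.
Qed.

Lemma proj_norm y : `|P y| <= `|y|.
Proof.
have := normD2 hip (P y) (y - P y); rewrite addrC subrK (ip_sym hip).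
rewrite proj_orth ?mulr0 ?addr0 => [ey|]; last exact: proj_in.
by rewrite -ler_sqr ?nnegrE // ey; have := sqr_ge0 `|y - P y|; lra.
Qed.

End OrthogonalProjection.

(* A fixed free ultrafilter on nat (refining the cofinite filter), and the
   induced limit of bounded real sequences; it plays the role of a Banach
   limit when we build weak limits through reflexivity. *)
Definition free_ultra_ex := ultraFilterLemma (@eventually_filter).
Definition free_ultra : set_system nat := projT1 (cid free_ultra_ex).
Global Instance free_ultra_ultra : UltraFilter free_ultra := (projT2 (cid free_ultra_ex)).1.

Lemma free_ultra_cofinite : (\oo : set_system nat) `<=` free_ultra.
Proof. exact: (projT2 (cid free_ultra_ex)).2. Qed.

Lemma free_ultra_unbounded (A : set nat) : free_ultra A ->
  forall N, exists n, (N <= n)%N /\ A n.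
Proof.
move=> UA N; have UN : free_ultra [set n | (N <= n)%N].
  by apply: free_ultra_cofinite; exists N.
by have [n [hn An]] := filter_ex (filterI UN UA); exists n.
Qed.

Section UltraLimit.
Variable R : realType.
Implicit Types (u v : nat -> R) (B : R).

Definition ulim u : R := lim (u @ free_ultra).

(* A bounded sequence converges along the ultrafilter (compactness of
   [-B, B]). *)
Lemma ulim_cvg u B : (forall n, `|u n| <= B) -> u @ free_ultra --> ulim u.
Proof.
move=> hB; suff [l hl] : exists l : R, u @ free_ultra --> l by exact: (cvgP l hl).
have hF : (u @ free_ultra) [set` `[-B, B]].
  by apply: nearW => n; rewrite /= in_itv /= -ler_norml.
have [l [_ cl]] := @segment_compact _ (-B) B (u @ free_ultra) _ hF.
exists l; apply/cvgrPdist_lt => e e0.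
case: (in_ultra_setVsetC [set n | `|l - u n| < e] free_ultra_ultra) => // far.
have far' : (u @ free_ultra) [set x | ~ `|l - x| < e] by [].
have [x [/= xfar]] := cl _ _ far' (nbhsx_ballx l e e0).
by rewrite -ball_normE.
Qed.

Lemma ulim_lim u l : u @ \oo --> l -> ulim u = l.
Proof.
move=> h; apply: (cvg_lim (@norm_hausdorff _ _)) => A hA.
exact/free_ultra_cofinite/h.
Qed.

Lemma ulim_lin a u v Bu Bv : (forall n, `|u n| <= Bu) -> (forall n, `|v n| <= Bv) ->
  ulim (fun n => a * u n + v n) = a * ulim u + ulim v.
Proof.
move=> hu hv; apply: (cvg_lim (@norm_hausdorff _ _)).
by apply: cvgD; [apply: cvgM; [exact: cvg_cst | exact: ulim_cvg hu] | exact: ulim_cvg hv].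
Qed.

Lemma ulim_bound u B : (forall n, `|u n| <= B) -> `|ulim u| <= B.
Proof.
move=> hu; have h : (fun n => `|u n|) @ free_ultra --> `|ulim u|.
  by apply: cvg_norm; exact: ulim_cvg hu.
by apply: (cvgr_to_le h); exact: nearW.
Qed.

Lemma ulim_near u B e : (forall n, `|u n| <= B) -> 0 < e ->
  free_ultra [set n | `|ulim u - u n| < e].
Proof. by move=> hu e0; move/cvgrPdist_lt : (ulim_cvg hu) => /(_ e e0). Qed.

End UltraLimit.

Lemma increasing_seq_ge (s : nat -> nat) : increasing_seq s -> forall n, (n <= s n)%N.
Proof.
by move/increasing_seqP => hs; elim=> [|n IH] //; exact: leq_ltn_trans IH (hs n).
Qed.

Lemma increasing_seq_comp (s t : nat -> nat) :
  increasing_seq s -> increasing_seq t -> increasing_seq (s \o t).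
Proof. by move=> hs ht m n; exact: etrans (hs _ _) (ht _ _). Qed.

Lemma cvg_subseq (T : topologicalType) (u : nat -> T) (l : T) (s : nat -> nat) :
  increasing_seq s -> u @ \oo --> l -> (u \o s) @ \oo --> l.
Proof.
move=> hs ul A /ul [N _ HN]; exists N => // n /= Nn.
by apply: HN; exact: leq_trans Nn (increasing_seq_ge hs n).
Qed.

Lemma tends_to_infty_subseq (m s : nat -> nat) :
  increasing_seq s -> tends_to_infty m -> tends_to_infty (m \o s).
Proof.
move=> hs hm N; have [n0 Hn0] := hm N; exists n0 => n n0n.
by apply: Hn0; exact: leq_trans n0n (increasing_seq_ge hs n).
Qed.

Lemma not_near_subseq (P : nat -> Prop) : ~ (\forall n \near \oo, P n) ->
  exists s, increasing_seq s /\ forall n, ~ P (s n).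
Proof.
move=> notP.
have next N : exists n, (N <= n)%N /\ ~ P n.
  apply: contrapT => hN; apply: notP; exists N => // n /= Nn.
  by apply: contrapT => nPn; apply: hN; exists n.
have [nx hnx] := choice next.
pose s := fix s n := if n is n'.+1 then nx (s n').+1 else nx 0%N.
exists s; split; first by apply/increasing_seqP => n; exact: (hnx _).1.
by case=> [|n]; exact: (hnx _).2.
Qed.

Section Dual.
Variables (R : realType) (X : normedModType R).

Lemma dual_bound (f : X -> R) : dual_set f ->
  exists C, 0 <= C /\ forall x, `|f x| <= C * `|x|.
Proof.
case=> _ [C hC]; exists `|C|; split => // x.
by apply: le_trans (hC x I) _; apply: ler_wpM2r => //; exact: ler_norm.
Qed.

Lemma dual_bounded_seq (f : X -> R) (x : nat -> X) B : dual_set f ->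
  (forall n, `|x n| <= B) -> exists C, forall n, `|f (x n)| <= C.
Proof.
move=> /dual_bound [C [C0 hC]] hB; exists (C * B) => n.
by apply: le_trans (hC _) _; apply: ler_wpM2l.
Qed.

(* In a reflexive space, the ultrafilter limit of f (x n), as a functional of
   f, is evaluation at a point w: every bounded sequence has a weak cluster
   point w along the ultrafilter. *)
Lemma ultra_weak_limit (x : nat -> X) B : reflexive_space X ->
  (forall n, `|x n| <= B) ->
  exists w, forall f, dual_set f -> ulim (fun n => f (x n)) = f w.
Proof.
move=> hXrefl hB; apply: (hXrefl (fun f => ulim (fun n => f (x n)))).
  move=> a f g hf hg.
  have [[Cf hCf] [Cg hCg]] := (dual_bounded_seq hf hB, dual_bounded_seq hg hB).
  exact: ulim_lin hCf hCg.
exists B => f M hf M0 hM; apply: ulim_bound => n.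
by apply: le_trans (hM _) _; rewrite [B * M]mulrC; exact: ler_wpM2l.
Qed.

End Dual.

Section Embedding.
Variables (R : realType) (X Y : normedModType R) (ip : Y -> Y -> R) (j : X -> Y).
Hypothesis hip : inner_product ip.
Hypothesis hj : bounded_linear_inj j.

Lemma emb_lin a x y : j (a *: x + y) = a *: j x + j y.
Proof. by case: hj. Qed.

Lemma emb_sub x y : j (x - y) = j x - j y.
Proof. by rewrite -scaleN1r addrC emb_lin scaleN1r addrC. Qed.

Lemma emb_inj : injective j.
Proof. by case: hj => _ []. Qed.

Lemma emb_bound : exists C, 0 <= C /\ forall x, `|j x| <= C * `|x|.
Proof.
case: hj => _ [_ [C hC]]; exists `|C|; split => // x.
by apply: le_trans (hC x) _; apply: ler_wpM2r => //; exact: ler_norm.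
Qed.

Lemma ip_emb_dual y : dual_set (fun x => ip (j x) y).
Proof.
split; first by move=> a x1 x2 _ _; rewrite emb_lin (ip_lin hip).
have [C [C0 hC]] := emb_bound; exists (C * `|y|) => x _.
apply: le_trans (cauchy_schwarz hip _ _) _.
by rewrite mulrAC; apply: ler_wpM2r => //; exact: hC.
Qed.

(* All ultrafilter weak cluster points of subsequences coincide, because they
   are identified through j and the inner product. *)
Lemma weak_cvg_of_ip_cvg (x : nat -> X) B : reflexive_space X ->
  (forall n, `|x n| <= B) ->
  (forall y, cvg ((fun n => ip (j (x n)) y) @ \oo)) -> exists w, weak_cvg x w.
Proof.
move=> hXrefl hB hc; have [w hw] := ultra_weak_limit hXrefl hB.
exists w; split => // f hf; apply/cvgrPdist_lt => e e0.
apply: contrapT => /not_near_subseq [s [hs far]].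
have hBs n : `|(x \o s) n| <= B by exact: hB.
have [w' hw'] := ultra_weak_limit hXrefl hBs.
have same_ip y : ip (j w') y = ip (j w) y.
  rewrite -(hw' _ (ip_emb_dual y)) -(hw _ (ip_emb_dual y)) /=.
  have hl := hc y.
  by rewrite (ulim_lim hl) (ulim_lim (cvg_subseq hs hl)).
have ww : w' = w.
  apply: emb_inj; apply/eqP; rewrite -subr_eq0; apply/eqP; apply: (ip_eq0 hip).
  by rewrite (ipBl hip) same_ip subrr.
have [C hC] := dual_bounded_seq hf hBs.
have [n [_ near_n]] := free_ultra_unbounded (ulim_near hC e0) 0.
by apply: (far n); rewrite (hw' _ hf) ww in near_n.
Qed.

End Embedding.

Section HilbertCompactness.
Variables (R : realType) (Y : completeNormedModType R) (ip : Y -> Y -> R).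
Hypothesis hip : inner_product ip.

Definition ip_cvg_set (y : nat -> Y) : set Y :=
  [set z | cvg ((fun n => ip (y n) z) @ \oo)].

Lemma ip_seq_bound (y : nat -> Y) B : (forall n, `|y n| <= B) ->
  exists C, 0 < C /\ forall z n, `|ip (y n) z| <= C * `|z|.
Proof.
move=> hB; exists (`|B| + 1); split; first by have := normr_ge0 B; lra.
move=> z n; apply: le_trans (cauchy_schwarz hip _ _) _; apply: ler_wpM2r => //.
by apply: le_trans (hB n) _; have := ler_norm B; lra.
Qed.

(* For a bounded sequence this set is a closed subspace: linearity is clear
   and closedness follows from a uniform Cauchy estimate in z. *)
Lemma ip_cvg_set_closed (y : nat -> Y) B : (forall n, `|y n| <= B) ->
  closed_subspace (ip_cvg_set y).
Proof.
move=> /ip_seq_bound [B' [B'0 bnd]].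
split; first split.
- apply: (cvgP 0); under eq_fun do rewrite (ip0r hip); exact: cvg_cst.
- move=> a z1 z2 c1 c2.
  apply: (cvgP (a * lim ((fun n => ip (y n) z1) @ \oo) + lim ((fun n => ip (y n) z2) @ \oo))).
  under eq_fun do rewrite (ip_sym hip) (ip_lin hip) !(ip_sym hip _ (y _)).
  by apply: cvgD => //; apply: cvgM => //; exact: cvg_cst.
move=> z zcl; apply: cauchy_cvg; apply: cauchy_exP => e e0.
have e2 : 0 < e / 2 by rewrite divr_gt0.
have ez : 0 < e / 2 / B' by rewrite divr_gt0.
have [z' [cz' zz']] := zcl _ (nbhsx_ballx z _ ez).
rewrite -ball_normE /= in zz'.
exists (lim ((fun n => ip (y n) z') @ \oo)).
move/cvgrPdist_lt: (cz') => /(_ _ e2) near_z'.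
apply: filterS near_z' => n /= near_n.
rewrite -ball_normE /=.
have -> : lim ((fun n => ip (y n) z') @ \oo) - ip (y n) z =
    (lim ((fun n => ip (y n) z') @ \oo) - ip (y n) z') + ip (y n) (z' - z).
  by rewrite (ipBr hip) addrA subrK.
apply: le_lt_trans (ler_normD _ _) _.
have : B' * `|z' - z| < e / 2 by rewrite distrC -ltr_pdivlMl // mulrC.
by have := bnd (z' - z) n; move=> *; lra.
Qed.

Lemma diagonal_subseq (y : nat -> Y) B : (forall n, `|y n| <= B) ->
  exists s, increasing_seq s /\ forall k, ip_cvg_set (y \o s) (y k).
Proof.
move=> /ip_seq_bound [C [C0 bnd]].
pose L k := ulim (fun n => ip (y n) (y k)).
have close eps : 0 < eps -> forall K,
    free_ultra [set m | forall k, (k <= K)%N -> `|L k - ip (y m) (y k)| < eps].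
  move=> e0; elim=> [|K IH].
    apply: filterS (ulim_near (bnd (y 0%N)) e0) => m near_m k.
    by rewrite leqn0 => /eqP ->.
  apply: filterS (filterI IH (ulim_near (bnd (y K.+1)) e0)) => m [near_m near_K] k.
  by rewrite leq_eqVlt ltnS => /orP [/eqP -> //|]; exact: near_m.
have next (KN : nat * nat) : exists m, (KN.2 < m)%N /\
    forall k, (k <= KN.1)%N -> `|L k - ip (y m) (y k)| < KN.1.+1%:R^-1.
  case: KN => K N /=; have K0 : 0 < K.+1%:R^-1 :> R by rewrite invr_gt0 ltr0n.
  by have [m [Nm close_m]] := free_ultra_unbounded (close _ K0 K) N.+1; exists m.
have [nx hnx] := choice next.
pose s := fix s n := if n is n'.+1 then nx (n, s n') else nx (0, 0)%N.
have s_close n k : (k <= n)%N -> `|L k - ip (y (s n)) (y k)| < n.+1%:R^-1.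
  case: n => [|n] kn; first exact: (hnx (0, 0)%N).2 k kn.
  exact: (hnx (n.+1, s n)).2 k kn.
exists s; split; first by apply/increasing_seqP => n; exact: (hnx _).1.
by move=> k; apply: (cvgP (L k)); apply: (cvg_invS_bound (k := k)) => n /s_close.
Qed.

(* The vectors where this holds form a closed subspace G that
   contains the sequence; if z = g + r with g in G and r orthogonal to G, then
   r belongs to G too (its inner products vanish), hence so does z. *)
Lemma ip_cvg_subseq (y : nat -> Y) B : (forall n, `|y n| <= B) ->
  exists s, increasing_seq s /\ forall z, ip_cvg_set (y \o s) z.
Proof.
move=> hB; have [s [hs cvg_terms]] := diagonal_subseq hB.
have hG := ip_cvg_set_closed (fun n => hB (s n)).
exists s; split => // z.
have [g Gg orth_g] := orth_decomposition hip hG z.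
have Gr : ip_cvg_set (y \o s) (z - g).
  apply: (cvgP 0); apply: cvg_near_cst; apply: nearW => n.
  by rewrite /= (ip_sym hip) orth_g //; exact: cvg_terms.
by have := subspaceD hG.1 Gg Gr; rewrite addrC subrK.
Qed.

End HilbertCompactness.

Section ConstantFunctions.
Variables (R : realType) (X : normedModType R) (p T : R).
Hypothesis hT : 0 < T.
Hypothesis hp : 1 < p.

Lemma Iset_measure : (@lebesgue_measure R) (Iset T) = T%:E.
Proof. by rewrite /Iset lebesgue_measure_itv /= lte_fin hT /= oppr0 adde0. Qed.

Lemma Lp_integral_cst (c : X) :
  (\int[@lebesgue_measure R]_(t in Iset T) ((`|c| `^ p)%:E) =
   ((`|c| `^ p) * T)%:E)%E.
Proof.
rewrite integral_cst; last exact: measurable_itv.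
transitivity ((`|c| `^ p)%:E * T%:E)%E; last by [].
by congr (_ * _)%E; exact: Iset_measure.
Qed.

Lemma Lp_cst (c : X) : Lp_fun p T (fun _ => c).
Proof.
split; last by rewrite Lp_integral_cst ltry.
exists (fun _ _ => c); split; last by apply: aeW => t _; exact: cvg_cst.
move=> k; exists 1%N, (fun _ => setT), (fun _ => c); split => // t.
by rewrite big_ord1 indicT /= scale1r.
Qed.

Lemma Lp_norm_cst (c : X) : Lp_norm p T (fun _ => c) = `|c| * T `^ p^-1.
Proof.
rewrite /Lp_norm Lp_integral_cst /= powRM ?powR_ge0 ?ltW // -powRrM mulfV ?powRr1 //.
by rewrite gt_eqF // (lt_trans _ hp).
Qed.

Lemma Lp_dual_cst (phi : (R -> X) -> R) : Lp_dual_elt p T phi ->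
  dual_set (fun x : X => phi (fun _ => x)).
Proof.
case=> phi_lin [C hC]; split.
  by move=> a x y _ _; rewrite -phi_lin //; exact: Lp_cst.
exists (C * T `^ p^-1) => x _; apply: le_trans (hC _ (Lp_cst x)) _.
by rewrite Lp_norm_cst [`|x| * _]mulrC mulrA.
Qed.

Lemma Lp_weak_cvg_cst (x : nat -> X) (w : X) :
  weak_cvg x w -> Lp_weak_cvg p T (fun n _ => x n) (fun _ => w).
Proof.
move=> [_ xw]; split; first exact: Lp_cst.
by split=> [n|phi /Lp_dual_cst]; [exact: Lp_cst | exact: xw].
Qed.

Lemma ae_Iset_const (Q : Prop) :
  {ae (@lebesgue_measure R), forall t, Iset T t -> Q} -> Q.
Proof.
case=> N [mN N0 sub]; apply: contrapT => notQ.
have IN : Iset T `<=` N by move=> t It; apply: sub => /= /(_ It).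
have : (@lebesgue_measure R) (Iset T) = 0%E.
  by apply/negligibleP; [exact: measurable_itv | exists N].
by rewrite Iset_measure => -[T0]; move: hT; rewrite T0 ltxx.
Qed.

(* Part (i): by (QNC.2) applied to time-constant functions, weak limits of
   discrete functions vn in V_(m n) lie in V. *)
Lemma weak_limit_in_V (V : set X) (Vn : nat -> set X) :
  quasi_nonconforming p T V Vn ->
  forall (m : nat -> nat) (vn : nat -> X) (v : X),
    tends_to_infty m -> (forall n, Vn (m n) (vn n)) -> weak_cvg vn v -> V v.
Proof.
move=> [_ [_ QNC2]] m vn v hm hvn vnv.
have [_ aeV] := QNC2 m (fun n _ => vn n) (fun _ => v) hm
  (fun n => conj (Lp_cst (vn n)) (aeW _ (fun t _ => hvn n)))
  (Lp_weak_cvg_cst vnv).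
exact: ae_Iset_const aeV.
Qed.

End ConstantFunctions.

Section WeakConvergenceThroughH.
Variables (R : realType) (X : normedModType R) (Y : completeNormedModType R).
Variables (ip : Y -> Y -> R) (j : X -> Y) (H : set Y) (P : Y -> Y).
Hypothesis hip : inner_product ip.
Hypothesis hj : bounded_linear_inj j.
Hypothesis hH : lin_subspace H.
Hypothesis hP : orth_proj ip H P.

Lemma ip_dual_on (h : Y) : dual_elt_on H (fun z => ip z h).
Proof.
split; first by move=> a x y _ _; rewrite (ip_lin hip).
by exists `|h| => z _; rewrite mulrC; exact: cauchy_schwarz hip _ _.
Qed.

(* Part (ii), forward direction: P_H j is bounded and linear, so it maps
   weakly convergent sequences to weakly convergent sequences. *)
Lemma weak_cvg_proj_emb (x : nat -> X) (w : X) : H (j w) ->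
  weak_cvg x w -> weak_cvg_in H (fun n => P (j (x n))) (j w).
Proof.
move=> Hjw [_ xw]; split => // f [f_lin [C hC]].
have [Cj [Cj0 hCj]] := emb_bound hj.
have fPj : dual_set (fun u => f (P (j u))).
  split=> [a u1 u2 _ _|].
    by rewrite (emb_lin hj) (proj_lin hip hH hP) f_lin //; exact: (proj_in (H := H) hP).
  exists (`|C| * Cj) => u _; apply: le_trans (hC _ (proj_in hP _)) _.
  apply: le_trans (ler_wpM2r (normr_ge0 _) (ler_norm C)) _.
  rewrite -mulrA; apply: ler_wpM2l => //.
  exact: le_trans (proj_norm hip hP _) (hCj _).
by have := xw _ fPj; rewrite /= (proj_id hip hH hP Hjw).
Qed.

Variables (V : set X) (Vn : nat -> set X).
Hypothesis hXrefl : reflexive_space X.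
Hypothesis hjVH : j @` V `<=` H.
Hypothesis limV : forall (m : nat -> nat) (vn : nat -> X) (v : X),
  tends_to_infty m -> (forall n, Vn (m n) (vn n)) -> weak_cvg vn v -> V v.

Lemma weak_limit_eq (x : nat -> X) (w v : X) :
  V w -> V v -> weak_cvg x w ->
  weak_cvg_in H (fun n => P (j (x n))) (j v) -> w = v.
Proof.
move=> Vw Vv [_ xw] [_ Pjx].
have [Hjw Hjv] : H (j w) /\ H (j v) by split; apply: hjVH; [exists w | exists v].
apply: (emb_inj hj); apply: (eq_in_subspace hip hH) => // h Hh.
have lim_w : (fun n => ip (P (j (x n))) h) @ \oo --> ip (j w) h.
  rewrite (_ : (fun n => _) = fun n => ip (j (x n)) h).
    exact: xw _ (ip_emb_dual hip hj h).
  by apply: funext => n; rewrite (ip_proj hip hP _ Hh).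
exact: cvg_unique lim_w (Pjx _ (ip_dual_on h)).
Qed.

(* Part (ii), backward direction: if vn does not converge weakly to v, some
   functional stays away from f v along a subsequence; by weak sequential
   compactness (Hilbert compactness of j vn plus the reflexivity criterion) a
   further subsequence converges weakly to some w, which lies in V by part (i)
   and equals v by weak_limit_eq. *)
Lemma weak_cvg_of_proj (m : nat -> nat) (vn : nat -> X) (v : X) M :
  tends_to_infty m -> (forall n, Vn (m n) (vn n)) -> (forall n, `|vn n| <= M) ->
  V v -> weak_cvg_in H (fun n => P (j (vn n))) (j v) -> weak_cvg vn v.
Proof.
move=> hm hvn hM Vv Pjv; split => // f hf.
apply/cvgrPdist_lt => e e0; apply: contrapT => /not_near_subseq [t [ht far]].
have [Cj [Cj0 hCj]] := emb_bound hj.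
have jbnd n : `|j (vn (t n))| <= Cj * M.
  by apply: le_trans (hCj _) _; apply: ler_wpM2l.
have [s [hs ip_cvg]] := ip_cvg_subseq hip jbnd.
have [w vw] := weak_cvg_of_ip_cvg hip hj hXrefl (fun n => hM (t (s n))) ip_cvg.
have hts := increasing_seq_comp ht hs.
have Vw : V w := limV (tends_to_infty_subseq hts hm) (fun n => hvn _) vw.
have Pjv_ts : weak_cvg_in H (fun n => P (j (vn (t (s n))))) (j v).
  by case: Pjv => Hjv cv; split => // g /cv; exact: cvg_subseq hts.
have wv := weak_limit_eq Vw Vv vw Pjv_ts; rewrite {}wv in vw.
move/cvgrPdist_lt: (vw.2 _ hf) => /(_ e e0) [N _ HN].
exact: far (s N) (HN N (leqnn N)).
Qed.

End WeakConvergenceThroughH.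

Section Approximation.
Variables (R : realType) (X Y : normedModType R) (j : X -> Y).
Variables (V : set X) (Vn : nat -> set X) (H : set Y) (p T : R).
Hypothesis hj : bounded_linear_inj j.
Hypothesis hQNC : quasi_nonconforming p T V Vn.

(* By (QNC.1) and the density of D in V, every v in V is approximated by
   elements of V_n with arbitrarily large n. *)
Lemma qnc_approx_V v : V v -> forall e, 0 < e -> forall N,
  exists n x, [/\ (N <= n)%N, Vn n x & `|v - x| < e].
Proof.
case: hQNC => _ [[D [_ [VD Dapprox]]] _] Vv e e0 N.
have e2 : 0 < e / 2 by rewrite divr_gt0.
have [d [Dd vd]] := VD v Vv _ (nbhsx_ballx v (e / 2) e2).
rewrite -ball_normE /= in vd.
have [w [Vnw /cvgrPdist_lt /(_ _ e2) [N' _ dw]]] := Dapprox d Dd.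
exists (maxn N N'), (w (maxn N N')); split => //; first exact: leq_maxl.
have := dw _ (leq_maxr N N'); rewrite /= => dwN.
rewrite -(subrK d v) -addrA; apply: le_lt_trans (ler_normD _ _) _.
by move: vd dwN; rewrite distrC => *; lra.
Qed.

(* Consequently, by density of j V in H, every h in H is approximated by
   j x with x in V_n and n arbitrarily large. *)
Lemma qnc_approx_H (h : Y) : H `<=` closure (j @` V) -> H h ->
  forall e, 0 < e -> forall N, exists n x, [/\ (N <= n)%N, Vn n x & `|h - j x| < e].
Proof.
move=> Hdense Hh e e0 N; have e2 : 0 < e / 2 by rewrite divr_gt0.
have [_ [[v Vv <-] hv]] := Hdense h Hh _ (nbhsx_ballx h (e / 2) e2).
rewrite -ball_normE /= in hv.
have [Cj [Cj0 hCj]] := emb_bound hj.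
have Cj1 : 0 < Cj + 1 by lra.
have [n [x [Nn Vnx vx]]] := qnc_approx_V Vv (divr_gt0 e2 Cj1) N.
exists n, x; split => //.
rewrite -(subrK (j v) h) -addrA -(emb_sub hj); apply: le_lt_trans (ler_normD _ _) _.
have jvx : `|j (v - x)| < e / 2.
  apply: le_lt_trans (hCj _) _; move: vx; rewrite ltr_pdivlMr // => vx.
  by have := normr_ge0 (v - x); nra.
by move: hv jvx => *; lra.
Qed.

Lemma qnc_approx_seq (h : Y) : H `<=` closure (j @` V) -> H h ->
  exists (m : nat -> nat) (vn : nat -> X),
    tends_to_infty m /\ (forall n, Vn (m n) (vn n)) /\ (fun n => j (vn n)) @ \oo --> h.
Proof.
move=> Hdense Hh.
have step k : exists q : nat * X, [/\ (k <= q.1)%N, Vn q.1 q.2 & `|h - j q.2| < k.+1%:R^-1].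
  have k0 : 0 < k.+1%:R^-1 :> R by rewrite invr_gt0 ltr0n.
  by have [n [x hx]] := qnc_approx_H Hdense Hh k0 k; exists (n, x).
have [q hq] := choice step.
exists (fun k => (q k).1), (fun k => (q k).2); split; last split.
- by move=> N; exists N => n Nn; case: (hq n) => Nq _ _; exact: leq_trans Nn Nq.
- by move=> n; case: (hq n).
- by apply: (cvg_invS_bound (k := 0)) => n _; case: (hq n).
Qed.

End Approximation.

Theorem mainTheorem4
  (R : realType)
  (X : completeNormedModType R) (Y : completeNormedModType R)
  (ip : Y -> Y -> R) (V : set X) (H : set Y) (j : X -> Y) (P : Y -> Y)
  (p T : R) (Vn : nat -> set X)
  (* (X,Y,j) evolution triple: X reflexive Banach, Y Hilbert, j linear
     injective bounded with dense range *)
  (hXrefl : reflexive_space X)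
  (hip : inner_product ip)
  (hj : bounded_linear_inj j)
  (hjdense : closure (range j) = setT)
  (* (V,H,j) evolution triple with V subset X (same norm; V Banach, i.e. a
     closed subspace), H subset Y (same inner product; H Hilbert, i.e. a
     closed subspace), the embedding V -> H being the restriction of j *)
  (hV : closed_subspace V)
  (hH : closed_subspace H)
  (hjVH : j @` V `<=` H)
  (hjVdense : H `<=` closure (j @` V))
  (* P_H : Y -> H orthogonal projection *)
  (hP : orth_proj ip H P)
  (* I = (0,T), T < oo, 1 < p < oo *)
  (hT : 0 < T) (hp : 1 < p)
  (hQNC : quasi_nonconforming p T V Vn) :
  (* (i) *)
  (forall (m : nat -> nat) (vn : nat -> X) (v : X),
      tends_to_infty m -> (forall n, Vn (m n) (vn n)) ->
      weak_cvg vn v -> V v) /\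
  (* (ii) *)
  (forall (m : nat -> nat) (vn : nat -> X) (v : X),
      tends_to_infty m -> (forall n, Vn (m n) (vn n)) ->
      (exists M : R, forall n, `|vn n| <= M) -> V v ->
      (weak_cvg vn v <-> weak_cvg_in H (fun n => P (j (vn n))) (j v))) /\
  (* (iii) *)
  (forall h : Y, H h ->
      exists (m : nat -> nat) (vn : nat -> X),
        tends_to_infty m /\ (forall n, Vn (m n) (vn n)) /\
        (fun n => j (vn n)) @ \oo --> h).
Proof.
have partI := weak_limit_in_V hT hp hQNC.
split; first exact: partI.
split; last by move=> h; exact (qnc_approx_seq hj hQNC hjVdense).
move=> m vn v hm hvn [M hM] Vv; split.
  by apply (weak_cvg_proj_emb hip hj hH.1 hP); apply: hjVH; exists v.
exact (weak_cvg_of_proj hip hj hH.1 hP hXrefl hjVH partI hm hvn hM Vv).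
Qed.
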